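(* Let $k\ge1$ be an integer. The expected number of fixed points of the permutation obtained by performing a $k$-riffle shuffle on $n$ cards followed by reversing the order of the cards is \[ 1-\frac{1}{k}+\frac{1}{k^2}-\cdots+\frac{(-1)^{n-1}}{k^{n-1}}.\]
   Context: A $k$-riffle shuffle on $n$ cards: cut the deck into $k$ consecutive piles of sizes $j_1,\dots,j_k$ with probability $\binom{n}{j_1,\dots,j_k}/k^n$, then drop cards one at a time, each time from a pile chosen with probability proportional to its current size. Reversing the order of the cards replaces the resulting permutation $w$ by $w\circ w_0$, $w_0(i)=n+1-i$. *)

From mathcomp Require Import all_boot all_order all_algebra all_fingroup.
Set Implicit Arguments. Unset Strict Implicit. Unset Printing Implicit Defensive.
Import GRing.Theory Num.Theory.
Local Open Scope ring_scope.

(* Cards and positions are indexed 0..n-1.  Before the shuffle the card with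
   label c sits at position c.  A cut is given by pile sizes
   j : {ffun 'I_k -> 'I_n.+1} with \sum_i j i = n; pile i consists of the
   cards \sum_(i' < i) j i', ..., \sum_(i' <= i) j i' - 1 (in order).
   The dropping process fills the positions 0, 1, ..., n-1 of the new deck
   in this order; f t : 'I_k records from which pile the card placed at
   position t was taken (each pile gives its cards in order). *)

Definition cut_prob (k n : nat) (j : {ffun 'I_k -> 'I_n.+1}) : rat :=
  if (\sum_(i < k) (j i : nat) == n)%N then
    (n`!)%:R / (\prod_(i < k) ((j i)`!)%:R) / (k%:R ^+ n)
  else 0.

Definition taken (k n : nat) (f : {ffun 'I_n -> 'I_k}) (t : 'I_n) : nat :=
  #|[set q : 'I_n | (q < t)%N && (f q == f t)]|.

(* probability that the dropping sequence is f, given the cut j: at step t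
   the pile f t is chosen with probability (its current size)/(total
   number of remaining cards) = (j (f t) - taken f t) / (n - t). *)
Definition drop_prob (k n : nat) (j : {ffun 'I_k -> 'I_n.+1})
    (f : {ffun 'I_n -> 'I_k}) : rat :=
  \prod_(t < n) (((j (f t) : nat) - taken f t)%N%:R / (n - t)%N%:R).

Definition card_at (k n : nat) (j : {ffun 'I_k -> 'I_n.+1})
    (f : {ffun 'I_n -> 'I_k}) (t : 'I_n) : nat :=
  (\sum_(i < k | (i < f t)%N) (j i : nat) + taken f t)%N.

(* probability that a k-riffle shuffle of n cards produces the permutation
   w (w t = label of the card at position t after the shuffle) *)
Definition riffle_prob (k n : nat) (w : 'S_n) : rat :=
  \sum_(j : {ffun 'I_k -> 'I_n.+1}) \sum_(f : {ffun 'I_n -> 'I_k})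
    cut_prob j * drop_prob j f *
    (if [forall t, card_at j f t == (w t : nat)] then 1 else 0).

Definition w0 (n : nat) : 'S_n := perm (@rev_ord_inj n).

Definition nfix (n : nat) (s : 'S_n) : nat := #|[set i | s i == i]|.

From mathcomp Require Import all_boot all_order all_algebra all_fingroup.
From mathcomp Require Import zify ring.
Set Implicit Arguments. Unset Strict Implicit. Unset Printing Implicit Defensive.
Import Order.TTheory GRing.Theory Num.Theory.

(* A k-riffle shuffle is the same as drawing a uniform word f in [k]^n (f t is
   the pile the card at position t comes from) and putting at position t the
   card labelled by the rank of (f t, t) among all pairs (f s, s) in
   lexicographic order: the cut probability times the dropping probability of
   f is k^-n when the pile sizes are the letter counts of f, and 0 otherwise.
   After reversing the deck, position t is fixed iff (f t, t) has rank n-1-t,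
   i.e. iff the number of letters <= f t before t equals the number of letters
   >= f t after t.  For a letter a and a word w, the difference of these two
   counts along the cut points of w is strictly increasing with steps 1 or 2,
   and the step is 2 exactly over a letter equal to a; so either it vanishes at
   exactly one cut, or it jumps from -1 to 1 over a letter a.  Counting both
   alternatives shows that the number B(m) of balanced pairs of words of total
   length m satisfies B(m+1) + B(m) = k^(m+1), hence
   B(m) / k^m = sum_(i <= m) (-1/k)^i, and the k choices of f t give the
   formula. *)

Lemma card_set_sum (T : finType) (P : pred T) : #|[set x | P x]| = \sum_x P x.
Proof. by rewrite -sum1dep_card big_mkcond; apply: eq_bigr => x _; case: (P x). Qed.

Lemma count_take_nth (T : Type) (x0 : T) (P : pred T) s t :
  count P (take t s) = \sum_(q < size s) ((q < t) && P (nth x0 s q)).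
Proof.
elim: s t => [|x s IH] t; first by rewrite big_ord0.
rewrite big_ord_recl; under eq_bigr => q _ do rewrite lift0.
by case: t => [|t] /=; [rewrite big1 | rewrite IH].
Qed.

Lemma count_drop_nth (T : Type) (x0 : T) (P : pred T) s t :
  count P (drop t s) = \sum_(q < size s) ((t <= q) && P (nth x0 s q)).
Proof.
elim: s t => [|x s IH] t; first by rewrite big_ord0.
rewrite big_ord_recl; under eq_bigr => q _ do rewrite lift0.
by case: t => [|t] /=; rewrite ?IH // -(IH 0) drop0.
Qed.

Lemma prod_sub_count_take k (x0 : 'I_k) (J : 'I_k -> nat) (s : seq 'I_k) n :
  size s = n ->
  \prod_(t < n) (J (nth x0 s t) - count_mem (nth x0 s t) (take t s))
  = \prod_(i < k) J i ^_ count_mem i s.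
Proof.
move=> <-; elim/last_ind: s => [|s x IH]; first by rewrite big_ord0 big1.
rewrite -cats1 size_cat addn1 big_ord_recr /= nth_cat ltnn subnn take_size_cat //.
under eq_bigr => t _ do rewrite nth_cat ltn_ord takel_cat 1?ltnW //.
rewrite IH (bigD1 x) //= [RHS](bigD1 x) //= !count_cat /= eqxx addn1 ffactnSr.
rewrite mulnAC; congr (_ * _); apply: eq_bigr => i /negbTE.
by rewrite count_cat /= eq_sym => ->; rewrite !addn0.
Qed.

Lemma ltn_lex n x y a b : a < n -> b < n ->
  (x * n + a < y * n + b) = (x < y) || (x == y) && (a < b).
Proof.
move=> an bn; case: (ltngtP x y) => [xy|yx|->] /=; last by rewrite ltn_add2l.
  by apply/idP; nia.
by apply/negbTE; rewrite -leqNgt; nia.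
Qed.

Lemma sum_zero_crossings (g : nat -> int) (m : nat) :
  (forall p, p < m -> (g p < g p.+1 <= g p + 2)%R) -> (0 <= g m)%R ->
  \sum_(p < m.+1) (g p == 0%R) + \sum_(p < m) ((g p == -1) && (g p.+1 == 1))%R
  = (g 0 <= 0)%R.
Proof.
elim: m g => [|m IH] g step gm0.
  by rewrite big_ord1 big_ord0 addn0; case: ltgtP gm0.
rewrite big_ord_recl [X in _ + X]big_ord_recl addnACA.
rewrite (IH (fun p => g p.+1)) => [|p hp|//]; last exact: step.
have /andP[] := step 0 isT; rewrite /=.
by move: (g 0) (g 1) => x y; lia.
Qed.

Section Words.
Variable k : nat.

Fixpoint words (n : nat) : seq (seq 'I_k) :=
  if n is n'.+1 then [seq x :: w | x <- index_enum 'I_k, w <- words n'] else [:: [::]].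

Lemma sum_words0 (F : seq 'I_k -> nat) : \sum_(w <- words 0) F w = F [::].
Proof. exact: big_seq1. Qed.

Lemma sum_wordsS n (F : seq 'I_k -> nat) :
  \sum_(w <- words n.+1) F w = \sum_(x < k) \sum_(w <- words n) F (x :: w).
Proof. exact: big_allpairs_dep. Qed.

Lemma sum1_words n : \sum_(w <- words n) 1 = k ^ n.
Proof.
elim: n => [|n IH]; first by rewrite sum_words0.
by rewrite sum_wordsS (eq_bigr _ (fun _ _ => IH)) sum_nat_const card_ord expnS.
Qed.

Lemma mem_words n w : (w \in words n) = (size w == n).
Proof.
elim: n w => [|n IH] w; first by rewrite inE; case: w.
apply/allpairsPdep/idP => [[x [v [_ vn ->]]] | ]; first by rewrite /= eqSS -IH.
case: w => // x w; rewrite /= eqSS -IH => wn.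
by exists x, w; rewrite mem_index_enum.
Qed.

Lemma uniq_words n : uniq (words n).
Proof.
elim: n => [|n IH] //=.
apply: allpairs_uniq_dep => //; first exact: index_enum_uniq.
by move=> [x1 w1] [x2 w2] _ _ /= [-> ->].
Qed.

Lemma sum_words_take_drop p q (F : seq 'I_k -> seq 'I_k -> nat) :
  \sum_(w <- words (p + q)) F (take p w) (drop p w)
  = \sum_(L <- words p) \sum_(R <- words q) F L R.
Proof.
elim: p F => [|p IH] F.
  by rewrite add0n sum_words0; apply: eq_bigr => w _; rewrite take0 drop0.
rewrite addSn !sum_wordsS; apply: eq_bigr => x _.
exact: (IH (fun L => F (x :: L))).
Qed.

Lemma sum_words_split (x0 : 'I_k) p q (F : seq 'I_k -> 'I_k -> seq 'I_k -> nat) :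
  \sum_(w <- words (p + q.+1)) F (take p w) (nth x0 w p) (drop p.+1 w)
  = \sum_(L <- words p) \sum_(x < k) \sum_(R <- words q) F L x R.
Proof.
have split_at w : F (take p w) (nth x0 w p) (drop p.+1 w)
                = F (take p w) (head x0 (drop p w)) (behead (drop p w)).
  by rewrite -nth0 nth_drop addn0 -drop1 drop_drop add1n.
rewrite (eq_bigr _ (fun w _ => split_at w)).
rewrite (sum_words_take_drop p q.+1 (fun L R => F L (head x0 R) (behead R))).
by apply: eq_bigr => L _; rewrite sum_wordsS.
Qed.

End Words.

Section Balanced.
Variables (k : nat) (a : 'I_k).

Definition balanced (L R : seq 'I_k) : bool :=
  count (fun x : 'I_k => x <= a) L == count (fun x : 'I_k => a <= x) R.

Lemma balanced_cut_unique (w : seq 'I_k) :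
  \sum_(p < (size w).+1) balanced (take p w) (drop p w)
  + \sum_(p < size w) ((nth a w p == a) && balanced (take p w) (drop p.+1 w)) = 1.
Proof.
pose cl p := count (fun x : 'I_k => x <= a) (take p w).
pose cr p := count (fun x : 'I_k => a <= x) (drop p w).
have step p : p < size w ->
    cl p.+1 = cl p + (nth a w p <= a) /\ cr p = (a <= nth a w p) + cr p.+1.
  move=> pw; rewrite /cl /cr (take_nth a pw) (drop_nth a pw) -cats1 count_cat /=.
  by rewrite addn0.
pose g p := ((cl p)%:Z - (cr p)%:Z)%R.
have -> : 1 = (g 0 <= 0)%R by rewrite /g /cl take0 /= subr_le0.
rewrite -(@sum_zero_crossings g (size w)) => [|p pw|]; last first.
- by rewrite /g /cl /cr take_size drop_size /= subr0.
- rewrite /g; have [-> ->] := step p pw.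
  by case: (leqP (nth a w p) a); case: (leqP a (nth a w p)); lia.
congr (_ + _); apply: eq_bigr => p _.
  by rewrite /balanced /g subr_eq0 eqz_nat.
rewrite /balanced /g -val_eqE /= -/(cl p) -/(cr p.+1).
have [-> ->] := step p (ltn_ord p).
by case: (ltngtP (nth a w p) a); lia.
Qed.

Definition balanced_pairs (m : nat) : nat :=
  \sum_(p < m.+1) \sum_(L <- words k p) \sum_(R <- words k (m - p)) balanced L R.

Lemma balanced_pairs0 : balanced_pairs 0 = 1.
Proof. by rewrite /balanced_pairs big_ord1 !sum_words0. Qed.

Lemma balanced_pairsS m : balanced_pairs m.+1 + balanced_pairs m = k ^ m.+1.
Proof.
have cut_unique w : w \in words k m.+1 -> 1 =
    \sum_(p < m.+2) balanced (take p w) (drop p w)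
    + \sum_(p < m.+1) ((nth a w p == a) && balanced (take p w) (drop p.+1 w)).
  by rewrite mem_words => /eqP <-; rewrite balanced_cut_unique.
rewrite -sum1_words (eq_big_seq _ cut_unique).
rewrite big_split; congr (_ + _); rewrite exchange_big; apply: eq_bigr => p _.
  have pm : p + (m.+1 - p) = m.+1 by rewrite subnKC // -ltnS.
  rewrite -[in words k m.+1]pm.
  by rewrite (sum_words_take_drop _ _ (fun L R => balanced L R : nat)).
have pm : p + (m - p).+1 = m.+1 by rewrite addnS subnKC // -ltnS.
rewrite -[in words k m.+1]pm.
rewrite (sum_words_split a _ _ (fun L x R => (x == a) && balanced L R : nat)).
apply: eq_bigr => L _; rewrite exchange_big; apply: eq_bigr => R _.
by rewrite (bigD1 a) //= eqxx big1 ?addn0 // => x /negbTE ->.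
Qed.

End Balanced.

Section Rank.
Variables (n : nat) (r : 'I_n -> nat).

Definition rank (t : 'I_n) : nat := #|[set s | r s < r t]|.

Lemma rank_lt t : rank t < n.
Proof.
rewrite -[n in _ < n]card_ord -cardsT; apply: proper_card; apply/properP.
by split; [apply: subsetT | exists t; rewrite ?inE ?ltnn].
Qed.

Lemma rank_mono s t : r s < r t -> rank s < rank t.
Proof.
move=> rst; apply: proper_card; apply/properP.
split; last by exists s; rewrite !inE ?ltnn.
by apply/subsetP => q; rewrite !inE => /ltn_trans; apply.
Qed.

Hypothesis r_inj : injective r.

Lemma rank_inj : injective (fun t => Ordinal (rank_lt t)).
Proof.
move=> s t /(congr1 val) /= e; apply: r_inj.
by case: (ltngtP (r s) (r t)) => // /rank_mono; rewrite e ltnn.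
Qed.

Definition rank_perm : 'S_n := perm rank_inj.

Lemma rank_permE t : rank_perm t = rank t :> nat.
Proof. by rewrite permE. Qed.

End Rank.

Lemma nfix_w0_mul n (w : 'S_n) : nfix (w0 n * w)%g = \sum_(t < n) (w t == rev_ord t).
Proof.
rewrite /nfix card_set_sum (reindex_inj rev_ord_inj); apply: eq_bigr => t _.
by rewrite permM /w0 permE rev_ordK.
Qed.

Section Riffle.
Variables (k n : nat) (f : {ffun 'I_n -> 'I_k}).

Definition word : seq 'I_k := [seq f t | t <- enum 'I_n].

Lemma size_word : size word = n.
Proof. by rewrite size_map size_enum_ord. Qed.

Lemma nth_word x0 (t : 'I_n) : nth x0 word t = f t.
Proof. by rewrite (nth_map t) ?nth_ord_enum // size_enum_ord. Qed.

Lemma count_word (P : pred 'I_k) : count P word = #|[set q | P (f q)]|.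
Proof. by rewrite -sum1_count big_map big_enum_cond sum1dep_card. Qed.

Lemma count_take_word (P : pred 'I_k) (t : 'I_n) :
  count P (take t word) = #|[set q : 'I_n | (q < t) && P (f q)]|.
Proof.
rewrite (count_take_nth (f t)) size_word card_set_sum.
by apply: eq_bigr => q _; rewrite nth_word.
Qed.

Lemma count_drop_word (P : pred 'I_k) (t : 'I_n) :
  count P (drop t.+1 word) = #|[set q : 'I_n | (t < q) && P (f q)]|.
Proof.
rewrite (count_drop_nth (f t)) size_word card_set_sum.
by apply: eq_bigr => q _; rewrite nth_word.
Qed.

Definition pile_sizes : {ffun 'I_k -> 'I_n.+1} :=
  [ffun i => inord #|[set t | f t == i]|].

Lemma pile_sizesE i : pile_sizes i = #|[set t | f t == i]| :> nat.
Proof. by rewrite ffunE inordK // ltnS -[n in _ <= n]card_ord max_card. Qed.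

Lemma sum_pile_sizes : \sum_(i < k) (pile_sizes i : nat) = n.
Proof.
rewrite -[n in RHS]card_ord -sum1_card (partition_big f xpredT) //=.
by apply: eq_bigr => i _; rewrite pile_sizesE -sum1dep_card.
Qed.

Definition lex_key (t : 'I_n) : nat := f t * n + t.

Lemma lex_key_inj : injective lex_key.
Proof.
move=> s t /(congr1 (modn^~ n)); rewrite !modnMDl !modn_small //.
exact: val_inj.
Qed.

Lemma lex_key_lt s t : (lex_key s < lex_key t) = (f s < f t) || (f s == f t) && (s < t).
Proof. by rewrite ltn_lex. Qed.

Definition riffle_perm : 'S_n := rank_perm lex_key_inj.

Lemma card_at_pile_sizes t : card_at pile_sizes f t = riffle_perm t.
Proof.
rewrite rank_permE /card_at /taken /rank.
have -> : \sum_(i < k | i < f t) (pile_sizes i : nat) = #|[set q | f q < f t]|.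
  rewrite -sum1dep_card (partition_big f (fun i : 'I_k => i < f t)) //=.
  apply: eq_bigr => i it; rewrite pile_sizesE -sum1dep_card; apply: eq_bigl => q.
  by case: eqP => [->|_]; rewrite ?it ?andbF.
rewrite !card_set_sum -big_split /=; apply: eq_bigr => q _.
by rewrite lex_key_lt -val_eqE; case: ltngtP; rewrite ?andbF /= ?andbT.
Qed.

Lemma riffle_perm_eq_rev t :
  (riffle_perm t == rev_ord t) = balanced (f t) (take t word) (drop t.+1 word).
Proof.
rewrite -val_eqE /= rank_permE /balanced count_take_word count_drop_word /rank.
rewrite !card_set_sum.
have -> : n - t.+1 = \sum_(q : 'I_n) ((t < q) && (f t <= f q))
                     + \sum_(q : 'I_n) ((t < q) && (f q < f t)).
  rewrite -big_split /= -[n in n - _]size_word -size_drop -count_predT.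
  rewrite count_drop_word card_set_sum; apply: eq_bigr => q _.
  by case: (t < q) => //=; rewrite leqNgt; case: (f q < f t).
have -> : \sum_(q : 'I_n) (lex_key q < lex_key t)
    = \sum_(q : 'I_n) ((q < t) && (f q <= f t))
      + \sum_(q : 'I_n) ((t < q) && (f q < f t)).
  rewrite -big_split /=; apply: eq_bigr => q _; rewrite lex_key_lt -val_eqE /=.
  case: (ltngtP q t) => [_|_|/val_inj ->]; rewrite ?ltnn /= ?andbT ?andbF ?orbF //.
  by rewrite orbC -leq_eqVlt addn0.
by rewrite eqn_add2r.
Qed.

End Riffle.

Lemma prod_sub_taken k n (f : {ffun 'I_n -> 'I_k}) (J : 'I_k -> nat) :
  \prod_(t < n) (J (f t) - taken f t) = \prod_(i < k) J i ^_ (pile_sizes f i).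
Proof.
case: k f J => [|k] f J; first by rewrite big_ord0 big1 // => t; case: (f t).
under [RHS]eq_bigr => i _ do rewrite pile_sizesE -(count_word f (pred1 i)).
rewrite -(prod_sub_count_take ord0 J (size_word f)).
by apply: eq_bigr => t _; rewrite nth_word count_take_word.
Qed.

Lemma sum_ffun_words k n (x0 : 'I_k) (G : seq 'I_k -> nat) :
  \sum_(f : {ffun 'I_n -> 'I_k}) G (word f) = \sum_(w <- words k n) G w.
Proof.
rewrite -(big_map (@word k n) xpredT G); apply: perm_big; apply: uniq_perm.
- rewrite map_inj_uniq ?index_enum_uniq // => f g fg.
  by apply/ffunP => i; rewrite -(nth_word f x0) -(nth_word g x0) fg.
- exact: uniq_words.
move=> w; rewrite mem_words; apply/mapP/eqP => [[f _ ->] | wn]; first exact: size_word.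
exists [ffun i : 'I_n => nth x0 w i]; first by rewrite mem_index_enum.
apply: (@eq_from_nth _ x0) => [|i]; first by rewrite wn size_word.
rewrite wn => ilt.
by rewrite (nth_word _ x0 (Ordinal ilt)) ffunE.
Qed.

Lemma sum_balanced_positions k m :
  \sum_(f : {ffun 'I_m.+1 -> 'I_k}) \sum_(t < m.+1)
      balanced (f t) (take t (word f)) (drop t.+1 (word f))
  = \sum_(a < k) balanced_pairs a m.
Proof.
case: k => [|k]; first by rewrite big_ord0 big1 // => f _; case: (f ord0).
under eq_bigr => f _ do under eq_bigr => t _ do rewrite -(nth_word f ord0).
rewrite (sum_ffun_words m.+1 ord0
  (fun w => \sum_(t < m.+1) balanced (nth ord0 w t) (take t w) (drop t.+1 w))).
rewrite exchange_big [RHS]exchange_big; apply: eq_bigr => t _.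
have tm : t + (m - t).+1 = m.+1 by rewrite addnS subnKC // -ltnS.
rewrite -[in words _ m.+1]tm.
by rewrite (sum_words_split ord0 _ _ (fun L a R => balanced a L R : nat)) exchange_big.
Qed.

Local Open Scope ring_scope.

Lemma balanced_pairs_ratio k (a : 'I_k) m :
  (balanced_pairs a m)%:R / k%:R ^+ m = \sum_(i < m.+1) (-1) ^+ i / k%:R ^+ i :> rat.
Proof.
under [RHS]eq_bigr => i _ do rewrite -exprVn -exprNn.
have kN0 : k%:R != 0 :> rat by rewrite pnatr_eq0 -lt0n (leq_ltn_trans _ (ltn_ord a)).
elim: m => [|m IH]; first by rewrite balanced_pairs0 big_ord1 expr0 divr1.
have -> : (balanced_pairs a m.+1)%:R = k%:R ^+ m.+1 - (balanced_pairs a m)%:R :> rat.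
  by rewrite -natrX -(balanced_pairsS a m) natrD addrK.
rewrite big_ord_recl expr0.
under eq_bigr => i _ do rewrite lift0 exprS.
rewrite -mulr_sumr -IH exprS; field.
by rewrite expf_neq0 kN0.
Qed.

Section RiffleDistribution.
Variables (k n : nat).
Hypothesis k_gt0 : (0 < k)%N.

Lemma drop_probE j (f : {ffun 'I_n -> 'I_k}) :
  drop_prob j f = (\prod_(i < k) (j i : nat) ^_ (pile_sizes f i))%:R / n`!%:R.
Proof.
rewrite /drop_prob prodf_div -!natr_prod (prod_sub_taken f (fun i => j i : nat)).
by rewrite -ffact_prod ffactnn.
Qed.

Lemma cut_drop_prob j (f : {ffun 'I_n -> 'I_k}) :
  cut_prob j * drop_prob j f = if j == pile_sizes f then (k%:R ^+ n)^-1 else 0.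
Proof.
rewrite drop_probE /cut_prob; have [-> | jN] := eqVneq j (pile_sizes f).
  rewrite sum_pile_sizes eqxx (eq_bigr _ (fun i _ => ffactnn _)) natr_prod.
  have kN0 : k%:R ^+ n != 0 :> rat by rewrite expf_neq0 // pnatr_eq0 -lt0n.
  have factN0 m : m`!%:R != 0 :> rat by rewrite pnatr_eq0 -lt0n fact_gt0.
  by field; rewrite kN0 factN0; apply/prodf_neq0 => i _; apply: factN0.
case: eqP => sum_j; last by rewrite /= mul0r.
have [i lt_ji] : exists i, (j i < pile_sizes f i)%N.
  apply/existsP; apply: contraNT jN => /existsPn ge.
  have le_ps i : (pile_sizes f i <= j i)%N by rewrite leqNgt ge.
  have [_] := leqif_sum (fun i (_ : xpredT i) => leqif_eq (le_ps i)).
  rewrite sum_pile_sizes sum_j eqxx => /esym/forallP eq_ps.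
  by apply/eqP/ffunP => i; apply/val_inj/eqP; rewrite eq_sym; exact: eq_ps.
have -> : (\prod_(i < k) j i ^_ pile_sizes f i)%N = 0%N.
  by rewrite (bigD1 i) //= ffact_small.
by rewrite !(mul0r, mulr0).
Qed.

Lemma riffle_probE (w : 'S_n) :
  riffle_prob k w = #|[set f : {ffun 'I_n -> 'I_k} | riffle_perm f == w]|%:R / k%:R ^+ n.
Proof.
rewrite /riffle_prob exchange_big card_set_sum natr_sum mulr_suml; apply: eq_bigr => f _.
under eq_bigr => j _ do rewrite cut_drop_prob // (fun_if (fun x => x * _)) mul0r.
rewrite -big_mkcond big_pred1_eq.
have -> : [forall t, card_at (pile_sizes f) f t == w t] = (riffle_perm f == w).
  apply/forallP/eqP => [card_w | <- t]; last by rewrite card_at_pile_sizes.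
  by apply/permP => t; apply/val_inj/eqP; rewrite /= -card_at_pile_sizes.
by case: eqP; rewrite ?mul1r ?mulr1 ?mul0r ?mulr0.
Qed.

Lemma riffle_expectation (F : 'S_n -> rat) :
  \sum_(w : 'S_n) riffle_prob k w * F w
  = (k%:R ^+ n)^-1 * \sum_(f : {ffun 'I_n -> 'I_k}) F (riffle_perm f).
Proof.
under eq_bigr => w _ do rewrite riffle_probE card_set_sum natr_sum !mulr_suml.
rewrite exchange_big mulr_sumr; apply: eq_bigr => f _.
rewrite (bigD1 (riffle_perm f)) //= eqxx big1 ?addr0 => [|w]; first by rewrite mul1r.
by rewrite eq_sym => /negbTE ->; rewrite !mul0r.
Qed.

End RiffleDistribution.

Theorem corollary4p2 (k n : nat) (hk : (1 <= k)%N) :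
  \sum_(w : 'S_n) riffle_prob k w * (nfix (w0 n * w)%g)%:R
  = \sum_(i < n) (-1) ^+ i / (k%:R ^+ i) :> rat.
Proof.
have kN0 : k%:R != 0 :> rat by rewrite pnatr_eq0 -lt0n.
rewrite riffle_expectation //.
under eq_bigr => f _ do rewrite nfix_w0_mul.
under eq_bigr => f _ do under eq_bigr => t _ do rewrite riffle_perm_eq_rev.
rewrite -natr_sum; case: n => [|m].
  by rewrite big1 ?mulr0 ?big_ord0 // => f _; rewrite big_ord0.
rewrite sum_balanced_positions natr_sum.
under eq_bigr => a _ do rewrite -[_%:R](divfK (expf_neq0 m kN0)) balanced_pairs_ratio.
rewrite sumr_const card_ord -mulr_natr exprSr.
by field; rewrite mul1r kN0 expf_neq0.
Qed.
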